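(* Let $X$ be a finite $T_0$-space admitting a free action of $\mathbb{Z}_2$ by homeomorphisms. Then (for a suitable labelling of $X$) $X_M$ is a block matrix $(A_{i,j})_{i,j=1,2}$ with blocks of size $\frac{|X|}{2}\times\frac{|X|}{2}$ such that $A_{1,1}=A_{2,2}$ and $A_{1,2}=A_{2,1}$. In particular, $\det(X_M)=\det(A_{1,1}+A_{1,2})\det(A_{1,1}-A_{1,2})$.
   Context: A finite $T_0$-space is identified with a finite poset via $x\le y$ iff $U_x\subseteq U_y$, where $U_x$ is the minimal open set containing $x$. For a labelling $X=\{x_1,\dots,x_n\}$, $X_M=(x_{i,j})$ is the $n\times n$ matrix with $x_{i,j}=0$ if $x_i\le x_j$ and $x_{i,j}=1$ otherwise. *)

(* A finite topological space is a finType T with a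
   topology tau : {set {set T}} (finite, so closure under binary unions
   and intersections suffices). *)
From mathcomp Require Import all_boot all_order all_algebra.
Set Implicit Arguments. Unset Strict Implicit. Unset Printing Implicit Defensive.
Import GRing.Theory Num.Theory.

Definition is_topology (T : finType) (tau : {set {set T}}) : Prop :=
  [/\ set0 \in tau, [set: T] \in tau,
      (forall U V, U \in tau -> V \in tau -> U :|: V \in tau) &
      (forall U V, U \in tau -> V \in tau -> U :&: V \in tau)].

Definition is_T0 (T : finType) (tau : {set {set T}}) : Prop :=
  forall x y : T, x != y -> exists2 U, U \in tau & (x \in U) != (y \in U).

Definition minopen (T : finType) (tau : {set {set T}}) (x : T) : {set T} :=
  \bigcap_(U in tau | x \in U) U.

Definition tle (T : finType) (tau : {set {set T}}) (x y : T) : bool :=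
  minopen tau x \subset minopen tau y.

Definition continuous_fin (T : finType) (tau : {set {set T}}) (g : T -> T) : Prop :=
  forall U, U \in tau -> g @^-1: U \in tau.

Definition homeomorphism_fin (T : finType) (tau : {set {set T}}) (g : T -> T) : Prop :=
  exists2 h : T -> T, cancel g h /\ cancel h g &
    continuous_fin tau g /\ continuous_fin tau h.

(* A free action of Z_2 by homeomorphisms: the non-trivial element acts by
   a homeomorphism g with g o g = id and no fixed points. *)
Definition free_Z2_action (T : finType) (tau : {set {set T}}) (g : T -> T) : Prop :=
  [/\ homeomorphism_fin tau g, (forall x, g (g x) = x) & (forall x, g x != x)].

Definition XM (T : finType) (tau : {set {set T}}) (n : nat) (lab : 'I_n -> T)
  : 'M[int]_n :=
  \matrix_(i, j) (if tle tau (lab i) (lab j) then 0%R else 1%R).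

(* An involutive homeomorphism g preserves the specialisation order, so the
   entry of X_M at (g x, g y) equals the one at (x, y).  Since g is free, T
   splits into a fundamental domain D and its image g(D); listing D and then
   g(D) in the same order makes X_M the block matrix [A B; B A].  Finally
   [A B; B A] is conjugate by unitriangular block matrices to the
   block-triangular [A+B 0; B A-B]. *)
From mathcomp Require Import all_boot all_order all_algebra.
Set Implicit Arguments. Unset Strict Implicit. Unset Printing Implicit Defensive.
Import GRing.Theory Num.Theory.
Local Open Scope ring_scope.

Section InvolutiveHomeomorphism.

Variables (T : finType) (tau : {set {set T}}) (g : T -> T).
Hypotheses (g_cont : continuous_fin tau g) (gK : involutive g).

Lemma mem_minopen_involution x y :
  (y \in minopen tau (g x)) = (g y \in minopen tau x).
Proof.
apply/bigcapP/bigcapP => yU U /andP [tauU xU];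
  by have := yU (g @^-1: U); rewrite !inE gK; apply; rewrite g_cont.
Qed.

Lemma tle_involution x y : tle tau (g x) (g y) = tle tau x y.
Proof.
apply/subsetP/subsetP => gxy z.
- by move=> zx; have := gxy (g z); rewrite !mem_minopen_involution gK; apply.
- by rewrite !mem_minopen_involution; apply: gxy.
Qed.

End InvolutiveHomeomorphism.

Section FreeInvolution.

Variables (T : finType) (g : T -> T).
Hypotheses (gK : involutive g) (g_free : forall x, g x != x).

Definition fundamental_domain : {set T} :=
  [set x | enum_rank x < enum_rank (g x)]%N.

Local Notation D := fundamental_domain.

Lemma mem_fundamental_domain_involution x : (g x \in D) = (x \notin D).
Proof.
rewrite !inE gK -leqNgt ltn_neqAle.
by rewrite (inj_eq val_inj) (inj_eq enum_rank_inj) g_free.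
Qed.

Lemma card_fundamental_domain : (#|D| + #|D|)%N = #|T|.
Proof.
rewrite -(cardsC D); have -> : ~: D = g @^-1: D.
  by apply/setP => x; rewrite [in RHS]inE mem_fundamental_domain_involution inE.
by rewrite card_preimset //; apply: can_inj gK.
Qed.

Definition paired_labelling (i : 'I_(#|D| + #|D|)) : T :=
  match split i with inl j => enum_val j | inr j => g (enum_val j) end.

Local Notation lab := paired_labelling.

Lemma paired_labelling_lshift i : lab (lshift _ i) = enum_val i.
Proof. by rewrite /lab (unsplitK (inl i)). Qed.

Lemma paired_labelling_rshift i : lab (rshift _ i) = g (lab (lshift _ i)).
Proof. by rewrite paired_labelling_lshift /lab (unsplitK (inr i)). Qed.

Lemma paired_labelling_bij : bijective lab.
Proof.
apply: inj_card_bij; last by rewrite card_ord card_fundamental_domain.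
have inD (j : 'I_#|D|) : enum_val j \in D by apply: enum_valP.
move=> i k; rewrite -[i]splitK -[k]splitK /lab !unsplitK.
case: (split i) => a; case: (split k) => b /= lab_ik.
- by rewrite (enum_val_inj lab_ik).
- by have := inD a; rewrite lab_ik mem_fundamental_domain_involution inD.
- by have := inD b; rewrite -lab_ik mem_fundamental_domain_involution inD.
- by rewrite (enum_val_inj (can_inj gK lab_ik)).
Qed.

Lemma free_involution_labelling :
  exists m (lab : 'I_(m + m) -> T),
    bijective lab /\ forall i, lab (rshift m i) = g (lab (lshift m i)).
Proof.
exists #|D|, lab; split; first exact: paired_labelling_bij.
exact: paired_labelling_rshift.
Qed.

End FreeInvolution.

Section PairedKernelMatrix.

Variables (R : Type) (T : finType) (g : T -> T) (F : T -> T -> R).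
Hypotheses (gK : involutive g) (F_g : forall x y, F (g x) (g y) = F x y).
Variables (m : nat) (lab : 'I_(m + m) -> T).
Hypothesis lab_rshift : forall i, lab (rshift m i) = g (lab (lshift m i)).

Let M : 'M[R]_(m + m) := \matrix_(i, j) F (lab i) (lab j).

Lemma paired_kernel_diag_blocks : ulsubmx M = drsubmx M.
Proof. by apply/matrixP => i j; rewrite !mxE !lab_rshift F_g. Qed.

Lemma paired_kernel_offdiag_blocks : ursubmx M = dlsubmx M.
Proof.
apply/matrixP => i j; rewrite !mxE !lab_rshift.
by rewrite -[in RHS](gK (lab (lshift m j))) F_g.
Qed.

End PairedKernelMatrix.

Lemma det_block_circulant (R : comPzRingType) (m : nat) (A B : 'M[R]_m) :
  \det (block_mx A B B A) = \det (A + B) * \det (A - B).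
Proof.
have det_unitri (C : 'M[R]_m) : \det (block_mx 1%:M C 0 1%:M) = 1.
  by rewrite det_ublock det1 mulr1.
have -> : block_mx A B B A =
    block_mx 1%:M (- 1%:M) 0 1%:M *m
    (block_mx (A + B) 0 B (A - B) *m block_mx 1%:M 1%:M 0 1%:M).
  rewrite !mulmx_block !(mulmx1, mul1mx, mulmx0, mul0mx, addr0, add0r, mulNmx).
  by rewrite addrK [B + _]addrC subrK [A + B]addrC addrK.
by rewrite !det_mulmx !det_unitri det_lblock mul1r mulr1.
Qed.

Theorem mainTheorem18 (T : finType) (tau : {set {set T}}) (g : T -> T) :
  is_topology tau -> is_T0 tau -> free_Z2_action tau g ->
  exists (m : nat) (lab : 'I_(m + m) -> T),
    [/\ bijective lab,
        ulsubmx (XM tau lab) = drsubmx (XM tau lab),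
        ursubmx (XM tau lab) = dlsubmx (XM tau lab) &
        \det (XM tau lab) =
          \det (ulsubmx (XM tau lab) + ursubmx (XM tau lab)) *
          \det (ulsubmx (XM tau lab) - ursubmx (XM tau lab))].
Proof.
move=> _ _ [[_ _ [g_cont _]] gK g_free].
have [m [lab [lab_bij lab_rshift]]] := free_involution_labelling gK g_free.
pose F x y : int := if tle tau x y then 0 else 1.
have F_g x y : F (g x) (g y) = F x y by rewrite /F tle_involution.
have ul_dr : ulsubmx (XM tau lab) = drsubmx (XM tau lab).
  exact: (paired_kernel_diag_blocks F_g lab_rshift).
have ur_dl : ursubmx (XM tau lab) = dlsubmx (XM tau lab).
  exact: (paired_kernel_offdiag_blocks gK F_g lab_rshift).
exists m, lab; split => //.
by rewrite -{1}(submxK (XM tau lab)) -ul_dr -ur_dl det_block_circulant.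
Qed.
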